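(* Let $P$ be a quasi-lattice ordered subsemigroup of a group $Q$ and $\Lambda$ an $(r,d)$-proper topological $P$-graph with path space $\Omega$. Let $A\in\Omega$. If $\lambda'\in A$ is extendable in $A$, then every $\lambda\in\Lambda$ with $\lambda\le\lambda'$ is extendable in $A$.
   Context: Quasi-lattice ordered: $P\subset Q$ subsemigroup with $P\cap P^{-1}=\{e\}$ such that two elements with a common upper bound (for $m\le n$ iff $n=mp$, $p\in P$) have a least upper bound. Topological $P$-graph: small category $\Lambda$, vertices $\Lambda^{(0)}\subset\Lambda$, $r,s:\Lambda\to\Lambda^{(0)}$, composition on pairs with $s(\lambda)=r(\mu)$; $\Lambda,\Lambda^{(0)}$ locally compact Hausdorff, $r,s$ continuous, $s$ a local homeomorphism, inclusion continuous, composition continuous and open; continuous multiplicative degree map $d:\Lambda\to P$, equal to $e$ on vertices, with composition $\Lambda^m*\Lambda^n\to\Lambda^{mn}$ a homeomorphism ($\Lambda^m=d^{-1}(m)$). $(r,d)$-proper: $(r,d):\Lambda\to\Lambda^{(0)}\times P$ proper. $\mu\le\lambda$ iff $\lambda=\mu\nu$ for some $\nu$. $\Omega$: nonempty closed hereditary (closed under $\le$-predecessors) directed (any two elements have a common upper bound inside) subsets of $\Lambda$. $E\subset\Lambda$ is exhaustive if for every $\lambda$ with $r(\lambda)\in r(E)$ there is $\mu\in E$ such that $\lambda,\mu$ have a common upper bound. For $A\in\Omega$, $\lambda\in A$ is extendable in $A$ if for every compact exhaustive $E\subset\Lambda$ with $r(E)$ a neighborhood of $s(\lambda)$ there exists $\mu\in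 E$ with $\lambda\mu\in A$. *)

From HB Require Import structures.
From mathcomp Require Import all_boot all_order.
From mathcomp Require Import all_classical all_reals topology.
Set Implicit Arguments. Unset Strict Implicit. Unset Printing Implicit Defensive.
Local Open Scope classical_set_scope.

Definition is_group (Q : Type) (mul : Q -> Q -> Q) (e : Q) (inv : Q -> Q) : Prop :=
  [/\ (forall x y z, mul x (mul y z) = mul (mul x y) z),
      (forall x, mul e x = x), (forall x, mul x e = x),
      (forall x, mul (inv x) x = e) & (forall x, mul x (inv x) = e)].

Definition is_cone (Q : Type) (mul : Q -> Q -> Q) (e : Q) (inv : Q -> Q)
  (P : set Q) : Prop :=
  (forall x y, P x -> P y -> P (mul x y)) /\
  (forall x, (P x /\ P (inv x)) <-> x = e).

Definition qle (Q : Type) (mul : Q -> Q -> Q) (P : set Q) (m n : Q) : Prop :=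
  exists2 p, P p & n = mul m p.

Definition quasi_lattice_ordered (Q : Type) (mul : Q -> Q -> Q) (e : Q)
  (inv : Q -> Q) (P : set Q) : Prop :=
  is_group mul e inv /\ is_cone mul e inv P /\
  forall m n, P m -> P n ->
    (exists k, qle mul P m k /\ qle mul P n k) ->
    exists l, [/\ qle mul P m l, qle mul P n l &
      forall k, qle mul P m k -> qle mul P n k -> qle mul P l k].

Definition loc_compact_hausdorff (T : topologicalType) : Prop :=
  hausdorff_space T /\ forall x : T, exists K : set T, compact K /\ nbhs x K.

Definition local_homeomorphism (T U : topologicalType) (f : T -> U) : Prop :=
  continuous f /\
  forall x : T, exists O : set T,
    [/\ open O, O x, {in O &, injective f}
      & forall W : set T, open W -> open (f @` (O `&` W))].

(* Lam = Λ (morphisms), V = Λ^(0) (with its own topology), iota : V -> Λ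
   the inclusion of vertices, r s : Λ -> V range and source, comp the
   composition (only meaningful on pairs with s λ = r μ), d : Λ -> Q the
   degree map (with values in P; P carries the discrete topology). *)

Definition composable (Lam V : Type) (r s : Lam -> V) : set (Lam * Lam) :=
  [set p | s p.1 = r p.2].

Definition topological_Pgraph (Q : Type) (mul : Q -> Q -> Q) (e : Q)
  (P : set Q) (Lam V : topologicalType) (iota : V -> Lam) (r s : Lam -> V)
  (comp : Lam -> Lam -> Lam) (d : Lam -> Q) : Prop :=
  [/\ injective iota,
      (forall v, r (iota v) = v /\ s (iota v) = v),
      (forall l, comp (iota (r l)) l = l /\ comp l (iota (s l)) = l),
      (forall l m, s l = r m -> r (comp l m) = r l /\ s (comp l m) = s m)
    & (forall l m n, s l = r m -> s m = r n ->
         comp l (comp m n) = comp (comp l m) n)] /\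
  [/\ loc_compact_hausdorff Lam, loc_compact_hausdorff V,
      continuous r, local_homeomorphism s & continuous iota] /\
  ({within composable r s, continuous (fun p : Lam * Lam => comp p.1 p.2)} /\
   forall W : set (Lam * Lam), open W ->
     open ((fun p : Lam * Lam => comp p.1 p.2) @` (W `&` composable r s))) /\
  (* degree map: P-valued, continuous for the discrete topology on P,
     multiplicative, e on vertices *)
  [/\ (forall l, P (d l)),
      (forall p, open (d @^-1` [set p])),
      (forall l m, s l = r m -> d (comp l m) = mul (d l) (d m))
    & (forall v, d (iota v) = e)] /\
  (* unique factorisation: composition Λ^m * Λ^n -> Λ^{mn} is a homeomorphism *)
  (forall m n, P m -> P n ->
     exists f : Lam -> Lam * Lam,
     [/\ (forall l, d l = mul m n ->
            [/\ s (f l).1 = r (f l).2, d (f l).1 = m, d (f l).2 = n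
              & comp (f l).1 (f l).2 = l]),
         (forall a b, s a = r b -> d a = m -> d b = n -> f (comp a b) = (a, b))
       & {within d @^-1` [set mul m n], continuous f}]).

(* (r,d)-proper: (r,d) : Λ -> Λ^(0) x P proper, P discrete; i.e. the preimage
   of K x {p} is compact for every compact K ⊆ Λ^(0) and p ∈ P *)
Definition rd_proper (Q : Type) (P : set Q) (Lam V : topologicalType)
  (r : Lam -> V) (d : Lam -> Q) : Prop :=
  forall (K : set V) (p : Q), compact K -> P p ->
    compact [set l | K (r l) /\ d l = p].

Definition pgle (Lam V : Type) (r s : Lam -> V) (comp : Lam -> Lam -> Lam)
  (m l : Lam) : Prop :=
  exists2 n, s m = r n & l = comp m n.

Definition common_ub (Lam V : Type) (r s : Lam -> V) (comp : Lam -> Lam -> Lam)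
  (l m : Lam) : Prop :=
  exists g, pgle r s comp l g /\ pgle r s comp m g.

Definition in_path_space (Lam : topologicalType) (V : Type) (r s : Lam -> V)
  (comp : Lam -> Lam -> Lam) (A : set Lam) : Prop :=
  [/\ A !=set0, closed A,
      (forall l m, A l -> pgle r s comp m l -> A m)
    & (forall l m, A l -> A m ->
         exists2 g, A g & pgle r s comp l g /\ pgle r s comp m g)].

Definition exhaustive (Lam V : Type) (r s : Lam -> V) (comp : Lam -> Lam -> Lam)
  (E : set Lam) : Prop :=
  forall l, (r @` E) (r l) -> exists2 m, E m & common_ub r s comp l m.

Definition extendable (Lam V : topologicalType) (r s : Lam -> V)
  (comp : Lam -> Lam -> Lam) (A : set Lam) (l : Lam) : Prop :=
  A l /\
  forall E : set Lam, compact E -> exhaustive r s comp E ->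
    nbhs (s l) (r @` E) ->
    exists2 m, E m & s l = r m /\ A (comp l m).

(* Write lambda' = lambda n. Given a compact exhaustive E with r(E) a
   neighbourhood of s(lambda), choose a compact neighbourhood W of n on which
   s is injective, d is constant and r lands in r(E). For each of the finitely
   many degrees p of E, take the paths of degree d(n) \/ p that start both
   with some a in W and with some mu in E of degree p, and collect their tails
   b (the path being a b). By (r,d)-properness this gives a compact set E',
   exhaustive thanks to E and the quasi-lattice order, with r(E') containing
   the neighbourhood s(W) of s(lambda'). Extending lambda' by some b in E'
   gives lambda n b = lambda a b = lambda mu t in A, where a = n by injectivity
   of s on W; hence lambda mu is in A by heredity. *)

From HB Require Import structures.
From mathcomp Require Import all_boot all_order.
From mathcomp Require Import all_classical all_reals topology finmap.
Local Open Scope classical_set_scope.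

Lemma choice_guarded {T U : Type} (u0 : U) (G : T -> Prop)
    (R : T -> U -> Prop) :
  (forall t, G t -> exists u, R t u) ->
  {f : T -> U | forall t, G t -> R t (f t)}.
Proof.
move=> exR; suff /choice[f fP] : forall t, exists u, G t -> R t u by exists f.
move=> t; have [/exR[u Ru]|nG] := pselect (G t); first by exists u.
by exists u0 => /nG.
Qed.

Lemma closedI_preimage {T U : topologicalType} {A O : set T} {B : set U}
    {g : T -> U} :
  closed A -> open O -> A `<=` O -> {within O, continuous g} -> closed B ->
  closed (A `&` g @^-1` B).
Proof.
move=> cA oO AO gc cB x clx.
have Ax : A x by apply: cA => C Cx; have [y [[Ay _] Cy]] := clx C Cx; exists y.
split => //; apply: cB => N Nx.
have gx : continuous_at x g.
  by move: gc; rewrite continuous_open_subspace // => /(_ x); apply;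
    exact/mem_set/AO.
have /clx[y [[_ By] Ny]] : nbhs x (g @^-1` N) by exact: gx.
by exists (g y).
Qed.

Lemma continuous_within_comp {T U W : topologicalType} {A : set T}
    {f : T -> U} {g : U -> W} :
  {within A, continuous f} -> continuous g -> {within A, continuous (g \o f)}.
Proof.
by move=> fc gc x; apply: (@continuous_comp _ _ _ (f : subspace A -> U));
  [exact: fc | exact: gc].
Qed.

Lemma compact_nbhs_subset {T : topologicalType} {x : T} {G : set T} :
  hausdorff_space T -> (exists K, compact K /\ nbhs x K) -> nbhs x G ->
  exists2 W, compact W & nbhs x W /\ W `<=` G.
Proof.
move=> hT [K [cK Kx]] Gx.
have [N Nx clNG] := compact_regular hT cK Kx Gx.
exists (K `&` closure N).
  by apply: compact_closedI => //; exact: closed_closure.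
split; last by move=> w [_ /clNG].
by apply: filterI => //; apply: filterS Nx; exact: subset_closure.
Qed.

Lemma open_map_nbhs {T U : topologicalType} {f : T -> U} {O N : set T} {x : T} :
  (forall W, open W -> open (f @` (O `&` W))) -> O x -> nbhs x N ->
  nbhs (f x) (f @` N).
Proof.
move=> fopen Ox; rewrite nbhsE => -[Z [oZ Zx] ZN]; rewrite nbhsE.
exists (f @` (O `&` Z)); first by split; [exact: fopen | exists x].
by move=> _ [y [_ Zy] <-]; exists y => //; exact: ZN.
Qed.

Lemma compact_finite_fibres {T : topologicalType} {U : Type} {f : T -> U}
    {E : set T} :
  compact E -> (forall u, open (f @^-1` [set u])) ->
  finite_subset_cover E (fun x => f @^-1` [set f x]) E.
Proof.
move=> cE fopen; have [->|/set0P[x0 _]] := eqVneq E set0.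
  by exists fset0.
pose Tp : ptopologicalType := HB.pack T (isPointed.Build T x0).
have : @cover_compact Tp E by rewrite -compact_cover.
by apply => [x _|x Ex]; [exact: fopen | exists x].
Qed.

Section PathExtension.
Set Implicit Arguments. Unset Strict Implicit.

Variables (Q : Type) (mul : Q -> Q -> Q) (P : set Q).
Variables (Lam V : topologicalType) (r s : Lam -> V).
Variables (comp : Lam -> Lam -> Lam) (d : Lam -> Q).

(* [t = (j, x, y)] with [j = m x = n y] the least upper bound of [m] and [n]. *)
Definition join_decomposition (m n : Q) (t : Q * Q * Q) :=
  [/\ t.1.1 = mul m t.1.2, t.1.1 = mul n t.2, P t.1.2, P t.2
    & forall k, qle mul P m k -> qle mul P n k -> qle mul P t.1.1 k].

Definition factorisation (m n : Q) (f : Lam -> Lam * Lam) :=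
  [/\ (forall l, d l = mul m n ->
        [/\ s (f l).1 = r (f l).2, d (f l).1 = m, d (f l).2 = n
          & comp (f l).1 (f l).2 = l]),
      (forall a b, s a = r b -> d a = m -> d b = n -> f (comp a b) = (a, b))
    & {within d @^-1` [set mul m n], continuous f}].

Hypothesis mulI : forall m, injective (mul m).
Hypothesis P_mul : forall m n, P m -> P n -> P (mul m n).
Variable join : Q -> Q -> Q * Q * Q.
Hypothesis joinP : forall m n, P m -> P n ->
  (exists k, qle mul P m k /\ qle mul P n k) ->
  join_decomposition m n (join m n).

Hypothesis comp_rs : forall l m, s l = r m ->
  r (comp l m) = r l /\ s (comp l m) = s m.
Hypothesis comp_assoc : forall l m n, s l = r m -> s m = r n ->
  comp l (comp m n) = comp (comp l m) n.
Hypothesis r_surj : forall v, exists l, r l = v.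
Hypothesis d_P : forall l, P (d l).
Hypothesis d_open : forall p, open (d @^-1` [set p]).
Hypothesis d_comp : forall l m, s l = r m -> d (comp l m) = mul (d l) (d m).
Variable factor : Q -> Q -> Lam -> Lam * Lam.
Hypothesis factorP : forall m n, P m -> P n -> factorisation m n (factor m n).
Hypothesis r_cont : continuous r.
Hypothesis rd : rd_proper P r d.

Lemma factorisation_unique a b a' b' : s a = r b -> s a' = r b' ->
  comp a b = comp a' b' -> d a = d a' -> a = a' /\ b = b'.
Proof.
move=> sab sab' eqc eqd.
have db : d b' = d b.
  by apply: (@mulI (d a)); rewrite {1}eqd -(d_comp sab') -(d_comp sab) eqc.
have [_ factorC _] := factorP (d_P a) (d_P b).
have := factorC a b sab erefl erefl.
by rewrite eqc (factorC a' b' sab' (esym eqd) db) => -[-> ->].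
Qed.

Lemma factor_spec m n l : P m -> P n -> d l = mul m n ->
  [/\ s (factor m n l).1 = r (factor m n l).2, d (factor m n l).1 = m,
      d (factor m n l).2 = n & comp (factor m n l).1 (factor m n l).2 = l].
Proof. by move=> Pm Pn; have [factorS _ _] := factorP Pm Pn; exact: factorS.
Qed.

Lemma factor_range m n x : P m -> P n -> d x = mul m n ->
  r (factor m n x).1 = r x.
Proof.
by move=> Pm Pn dx; have [s12 _ _ e12] := factor_spec Pm Pn dx;
  rewrite -(comp_rs s12).1 e12.
Qed.

Lemma factor_source m n x : P m -> P n -> d x = mul m n ->
  s (factor m n x).2 = s x.
Proof.
by move=> Pm Pn dx; have [s12 _ _ e12] := factor_spec Pm Pn dx;
  rewrite -(comp_rs s12).2 e12.
Qed.

Lemma factor_prefix m n x y a b : P m -> P n -> d x = mul m n -> s x = r y ->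
  s a = r b -> d a = m -> comp x y = comp a b ->
  (factor m n x).1 = a /\ comp (factor m n x).2 y = b.
Proof.
move=> Pm Pn dx sxy sab da exy.
have [s12 d1 _ e12] := factor_spec Pm Pn dx.
have s2y : s (factor m n x).2 = r y by rewrite factor_source.
apply: factorisation_unique => //.
- by rewrite (comp_rs s2y).1.
- by rewrite comp_assoc // e12.
- by rewrite d1 da.
Qed.

Hypothesis Lam_hausdorff : hausdorff_space Lam.

Section Suffixes.
Variables (m0 : Q) (W E : set Lam).
Hypothesis Pm0 : P m0.
Hypothesis W_compact : compact W.
Hypothesis W_deg : forall w, W w -> d w = m0.
Hypothesis W_range : r @` W `<=` r @` E.
Hypothesis E_compact : compact E.
Hypothesis E_exhaustive : exhaustive r s comp E.

(* The paths [x] of degree [m0 \/ p] that start with some [a] in [W] and with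
   a path of [E] of degree [p]; their tails after [a] are the suffixes. *)
Definition suffix_domain p :=
  [set x | join_decomposition m0 p (join m0 p) /\ d x = (join m0 p).1.1 /\
    W (factor m0 (join m0 p).1.2 x).1 /\ E (factor p (join m0 p).2 x).1].

Definition suffixes p :=
  (fun x => (factor m0 (join m0 p).1.2 x).2) @` suffix_domain p.

Lemma suffixes_compact p : P p -> compact (suffixes p).
Proof.
move=> Pp.
have [Jp|NJ] := pselect (join_decomposition m0 p (join m0 p)); last first.
  suff -> : suffixes p = set0 by exact: compact0.
  by apply/seteqP; split => [b [x [/NJ]]|].
have [j0 j1 Px Py _] := Jp; set q := (join m0 p).1.1 in j0 j1 *.
have [_ _ c0] := factorP Pm0 Px; rewrite -j0 in c0.
have [_ _ c1] := factorP Pp Py; rewrite -j1 in c1.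
pose T := [set x | (r @` W) (r x) /\ d x = q].
have cT : compact T.
  apply: rd; last by rewrite j0; exact: P_mul.
  by apply: continuous_compact => //; exact: continuous_subspaceT.
have Tq : T `<=` d @^-1` [set q] by move=> x [].
have domE : suffix_domain p =
    T `&` (fst \o factor m0 (join m0 p).1.2) @^-1` W
      `&` (fst \o factor p (join m0 p).2) @^-1` E.
  apply/seteqP; split => x; last by move=> [[[_ dx] Wa] Em].
  move=> [_ [dx [Wa Em]]]; split => //; split => //; split => //.
  by exists (factor m0 (join m0 p).1.2 x).1; rewrite // factor_range -?j0.
have fst_cont : continuous (@fst Lam Lam) by move=> ?; exact: cvg_fst.
have snd_cont : continuous (@snd Lam Lam) by move=> ?; exact: cvg_snd.
apply: continuous_compact.
  apply: (continuous_subspaceW _ (continuous_within_comp c0 snd_cont)).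
  by rewrite domE => x [[[]]].
apply: (subclosed_compact _ cT); last by rewrite domE => x [[]].
rewrite domE; apply: (closedI_preimage _ (d_open q)).
- apply: (closedI_preimage _ (d_open q)) => //.
  + exact: compact_closed.
  + exact: continuous_within_comp c0 fst_cont.
  + exact: compact_closed.
- by move=> x [/Tq].
- exact: continuous_within_comp c1 fst_cont.
- exact: compact_closed.
Qed.

Lemma suffixes_factor p b : P p -> suffixes p b ->
  exists a m t, [/\ W a, E m, s a = r b, s m = r t & comp a b = comp m t].
Proof.
move=> Pp [x [[j0 j1 Px Py _] [dx [Wa Em]]] <-].
have [sab _ _ eab] := factor_spec Pm0 Px (etrans dx j0).
have [smt _ _ emt] := factor_spec Pp Py (etrans dx j1).
by do 3!eexists; split; [exact: Wa | exact: Em | exact: sab | exact: smt |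
  rewrite eab emt].
Qed.

Lemma suffixes_cover w l : W w -> r l = s w ->
  exists m, E m /\ exists2 b, suffixes (d m) b & common_ub r s comp l b.
Proof.
move=> Ww rl; have [rwl swl] := comp_rs (esym rl).
have /E_exhaustive[m Em [g [[al sal gal] [be sbe gbe]]]] :
    (r @` E) (r (comp w l)) by rewrite rwl; apply: W_range; exists w.
have slal : s l = r al by rewrite -swl.
have [rlal _] := comp_rs slal.
have swla : s w = r (comp l al) by rewrite rlal rl.
have gw : g = comp w (comp l al) by rewrite gal comp_assoc.
have dgw : d g = mul m0 (d (comp l al)) by rewrite gw (d_comp swla) W_deg.
have dgm : d g = mul (d m) (d be) by rewrite gbe d_comp.
have J : join_decomposition m0 (d m) (join m0 (d m)).
  by apply: joinP => //; exists (d g); split; [exists (d (comp l al)) |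
    exists (d be)].
have [j0 j1 Px Py least] := J; set q := (join m0 (d m)).1.1 in j0 j1 least.
have [z Pz dgz] := least (d g) (ex_intro2 _ _ _ (d_P _) dgw)
  (ex_intro2 _ _ _ (d_P _) dgm).
have Pq : P q by rewrite j0; exact: P_mul.
have [sxr dx _ exr] := factor_spec Pq Pz dgz.
set x := (factor q z g).1 in sxr dx exr; set rho := (factor q z g).2 in sxr exr.
have [wa bl] : (factor m0 (join m0 (d m)).1.2 x).1 = w /\
    comp (factor m0 (join m0 (d m)).1.2 x).2 rho = comp l al.
  apply: factor_prefix => //; first by rewrite -j0.
    exact: W_deg.
  by rewrite exr.
have [ma _] : (factor (d m) (join m0 (d m)).2 x).1 = m /\
    comp (factor (d m) (join m0 (d m)).2 x).2 rho = be.
  by apply: factor_prefix => //; [rewrite -j1 | rewrite exr].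
exists m; split => //; exists (factor m0 (join m0 (d m)).1.2 x).2.
  by exists x => //; split => //; rewrite wa ma.
exists (comp l al); split; first by exists al.
by exists rho => //; rewrite factor_source // -j0.
Qed.

Lemma suffix_set_exists : exists E' : set Lam,
  [/\ compact E', exhaustive r s comp E', s @` W `<=` r @` E'
    & forall b, E' b -> exists a m t,
        [/\ W a, E m, s a = r b, s m = r t & comp a b = comp m t]].
Proof.
have [D _ ED] := compact_finite_fibres E_compact d_open.
set E' := \bigcup_(m in [set` D]) suffixes (d m).
have E'_factor b : E' b -> exists a m t,
    [/\ W a, E m, s a = r b, s m = r t & comp a b = comp m t].
  by move=> [m _ Sb]; exact: suffixes_factor (d_P m) Sb.
have E'_cover w l : W w -> r l = s w ->
    exists2 b, E' b & common_ub r s comp l b.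
  move=> Ww rl; have [m [Em [b Sb ub]]] := suffixes_cover Ww rl.
  have [m' Dm' /= dm] := ED m Em.
  by exists b => //; exists m' => //; rewrite -dm.
exists E'; split => //.
- rewrite /E' bigcup_fset; apply: bigsetU_compact => m _.
  exact: suffixes_compact.
- move=> l [b E'b rb]; have [a [m [t [Wa _ sab _ _]]]] := E'_factor b E'b.
  by apply: (E'_cover a); rewrite // -rb sab.
- move=> _ [w Ww <-]; have [l rl] := r_surj (s w).
  have [b E'b [g [[al sal gal] [be sbe gbe]]]] := E'_cover w l Ww rl.
  exists b => //.
  by rewrite -rl -(comp_rs sal).1 -gal gbe (comp_rs sbe).1.
Qed.

End Suffixes.

Hypothesis Lam_locally_compact :
  forall x : Lam, exists K, compact K /\ nbhs x K.
Hypothesis s_local : forall x, exists O, [/\ open O, O x, {in O &, injective s}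
  & forall W, open W -> open (s @` (O `&` W))].

Lemma extendable_prefix (A : set Lam) l n :
  (forall x y, A x -> pgle r s comp y x -> A y) -> s l = r n ->
  extendable r s comp A (comp l n) -> extendable r s comp A l.
Proof.
move=> A_hered sln [Aln ext]; split; first by apply: A_hered Aln _; exists n.
move=> E cE exE nbE.
have [O [oO On s_inj s_open]] := s_local n.
have nbG : nbhs n (O `&` r @^-1` (r @` E) `&` d @^-1` [set d n]).
  apply: filterI; first apply: filterI.
  - exact: open_nbhs_nbhs.
  - by apply: r_cont; rewrite -sln.
  - exact: open_nbhs_nbhs.
have [W cW [nW WG]] :=
  compact_nbhs_subset Lam_hausdorff (Lam_locally_compact n) nbG.
have W_deg w : W w -> d w = d n by move=> /WG[].
have W_range : r @` W `<=` r @` E by move=> _ [w /WG[[_ ?] _] <-].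
have [E' [cE' exE' sWE' E'_factor]] :=
  suffix_set_exists (d_P n) cW W_deg W_range cE exE.
have nbE' : nbhs (s (comp l n)) (r @` E').
  rewrite (comp_rs sln).2; apply: filterS sWE' _.
  exact: open_map_nbhs s_open On nW.
have [b E'b [slnb Alnb]] := ext E' cE' exE' nbE'.
have [a [m [t [Wa Em sab smt eab]]]] := E'_factor b E'b.
have an : a = n.
  have [[Oa _] _] := WG a Wa.
  apply: s_inj; [exact: mem_set | exact: mem_set |].
  by rewrite sab -slnb (comp_rs sln).2.
subst a.
have [rnb _] := comp_rs sab.
have [rmt _] := comp_rs smt.
have slm : s l = r m by rewrite sln -rnb eab rmt.
exists m => //; split => //; apply: A_hered Alnb _.
exists t; first by rewrite (comp_rs slm).2.
by rewrite -comp_assoc // eab comp_assoc.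
Qed.

End PathExtension.

Theorem lemma6p15 (Q : Type) (mul : Q -> Q -> Q) (e : Q) (inv : Q -> Q)
  (P : set Q) (Lam V : topologicalType) (iota : V -> Lam) (r s : Lam -> V)
  (comp : Lam -> Lam -> Lam) (d : Lam -> Q) :
  quasi_lattice_ordered mul e inv P ->
  topological_Pgraph mul e P iota r s comp d ->
  rd_proper P r d ->
  forall A : set Lam, in_path_space r s comp A ->
  forall l' : Lam, A l' -> extendable r s comp A l' ->
  forall l : Lam, pgle r s comp l l' -> extendable r s comp A l.
Proof.
move=> [[mulA mul1 _ mulV _] [[P_mul _] P_lub]].
move=> [[_ iota_rs _ comp_rs comp_assoc] [[[hL lcL] _ r_cont [_ s_local] _]
  [_ [[d_P d_open d_comp _] factor_ex]]]] rd A [_ _ A_hered _] l' _ l'_ext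
  l [n sln el']; subst l'.
have mulI m : injective (mul m).
  by move=> a b eq; rewrite -(mul1 a) -(mul1 b) -(mulV m) -!mulA eq.
have /(choice_guarded (e, e, e))[join joinP] : forall mk : Q * Q,
    [/\ P mk.1, P mk.2 & exists j, qle mul P mk.1 j /\ qle mul P mk.2 j] ->
    exists t, join_decomposition mul P mk.1 mk.2 t.
  move=> [m k] [Pm Pk /(P_lub m k Pm Pk)[j [[x Px jx] [y Py jy] least]]].
  by exists (j, x, y).
have /(choice_guarded (fun x : Lam => (x, x)))[factor factorP] :
    forall mk : Q * Q, P mk.1 /\ P mk.2 ->
    exists f, factorisation mul r s comp d mk.1 mk.2 f.
  by move=> [m k] [Pm Pk]; exact: factor_ex.
apply: (extendable_prefix mulI P_mul (join := fun m k => join (m, k)) _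
  comp_rs comp_assoc _ d_P d_open d_comp (factor := fun m k => factor (m, k)) _
  r_cont rd hL lcL s_local A_hered sln l'_ext).
- by move=> m k Pm Pk ub; exact: (joinP (m, k)).
- by move=> v; exists (iota v); exact: (iota_rs v).1.
- by move=> m k Pm Pk; exact: (factorP (m, k)).
Qed.
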